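(* Let $p,q\geq 0$ be integers and let $M$ be a $(p+q)\times(p+q)$ complex matrix with $M=M^*$ and $M^*I_{p,q}M=I_{p,q}$. Then \[ \operatorname{rank}(M-I_{p,q})+\operatorname{rank}(M+I_{p,q})\leq p+q. \]
   Context: $I_{p,q}=\mathrm{diag}\{I_p,-I_q\}$, where $I_p$ is the $p\times p$ identity matrix; $M^*$ denotes the conjugate transpose of $M$. The set of such $M$ is denoted $\mathbf{U}_s(p,q)$ (self-adjoint elements of the pseudo-unitary group $\mathbf{U}(p,q)=\{M\in\mathbf{GL}(p+q,\mathbb{C}):M^*I_{p,q}M=I_{p,q}\}$). *)

From mathcomp Require Import all_boot all_order all_algebra all_field.
Set Implicit Arguments. Unset Strict Implicit. Unset Printing Implicit Defensive.
Import GRing.Theory Num.Theory.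
Local Open Scope ring_scope.

(* Complex numbers are modelled by algC (algebraically closed field of
   characteristic 0 with complex conjugation). *)

Definition adjmx (m n : nat) (M : 'M[algC]_(m, n)) : 'M[algC]_(n, m) :=
  (map_mx (fun z : algC => z^*) M)^T.

Definition Ipq (p q : nat) : 'M[algC]_(p + q) :=
  block_mx 1%:M 0 0 (- 1%:M).

From mathcomp Require Import all_boot all_order all_algebra all_field.
Set Implicit Arguments. Unset Strict Implicit. Unset Printing Implicit Defensive.
Import GRing.Theory.
Local Open Scope ring_scope.

(* Since M = M^*, the hypothesis reads M J M = J with J = I_{p,q}, so A := M J is
   an involution. Then (A - 1)(A + 1) = 0, whence rank (A - 1) + rank (A + 1) <= n
   by Sylvester's inequality, and M -+ J = (A -+ 1) J has the rank of A -+ 1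
   because J is invertible. *)

Section Involutions.

Variables (F : fieldType) (n : nat).
Implicit Types A J M : 'M[F]_n.

Lemma involution_rank_sub1_add1_le A :
  A *m A = 1%:M -> (\rank (A - 1%:M)%R + \rank (A + 1%:M)%R <= n)%N.
Proof.
move=> AA; apply: mulmx0_rank_max.
by rewrite mulmxBl mulmxDr AA mul1mx mulmx1 opprD addrA addrK subrr.
Qed.

Lemma rank_sub_add_le_of_twisted_involution J M :
  J *m J = 1%:M -> M *m J *m M = J ->
  (\rank (M - J)%R + \rank (M + J)%R <= n)%N.
Proof.
move=> JJ MJM; set A := M *m J.
have J_free : row_free J by rewrite row_free_unit; case: (mulmx1_unit JJ).
have MsubJ : M - J = (A - 1%:M) *m J by rewrite mulmxBl mul1mx -mulmxA JJ mulmx1.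
have MaddJ : M + J = (A + 1%:M) *m J by rewrite mulmxDl mul1mx -mulmxA JJ mulmx1.
rewrite MsubJ MaddJ !mxrankMfree //; apply: involution_rank_sub1_add1_le.
by rewrite mulmxA MJM.
Qed.

End Involutions.

Lemma Ipq_involutive (p q : nat) : Ipq p q *m Ipq p q = 1%:M.
Proof.
rewrite /Ipq mulmx_block !mul1mx !mul0mx !mulmx0 !addr0 !add0r.
by rewrite mulmxN mulNmx mulmx1 opprK scalar_mx_block.
Qed.

Theorem corollary3p3 (p q : nat) (M : 'M[algC]_(p + q)) :
  adjmx M = M ->
  adjmx M *m Ipq p q *m M = Ipq p q ->
  (\rank (M - Ipq p q)%R + \rank (M + Ipq p q)%R <= p + q)%N.
Proof.
move=> M_selfadj; rewrite M_selfadj.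
exact/rank_sub_add_le_of_twisted_involution/Ipq_involutive.
Qed.
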